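(* Assume: (i) there is $L_f>0$ with $\|f(w,t)-f(y,t)\|_2\le L_f\|w-y\|_2$ for all $w,y\in\mathbb{R}^{N_s}$, $t\in[0,T]$; (ii) $\Delta t<\sigma_{\min}(A_{LM})/(L_f\sigma_{\max}(B_{LM}))$; (iii) there is $P>0$ with $\|\bar A\,\bar r(w)\|_2\ge P\|\bar r(w)\|_2$ for all $w\in\mathcal{S}$. Let $x\in\mathbb{R}^{N_sN_t}$ satisfy $\bar r(x)=0$, and set $K_r:=\sigma_{\min}(A_{LM})-\Delta t L_f\sigma_{\max}(B_{LM})$. Then for every $w\in\mathcal{S}$, $$\max_{1\le n\le N_t}\|x^n-w^n\|_2\le\|x-w\|_2\le\frac{1}{PK_r}\|\bar A\,\bar r(w)\|_2.$$ In particular, for $\tilde x\in\arg\min_{w\in\mathcal{S}}\|\bar A\,\bar r(w)\|_2$, $$\max_{1\le n\le N_t}\|x^n-\tilde x^n\|_2\le\|x-\tilde x\|_2\le\frac{1}{PK_r}\min_{w\in\mathcal{S}}\|\bar A\,\bar r(w)\|_2.$$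
   Context: Let $f:\mathbb{R}^{N_s}\times[0,T]\to\mathbb{R}^{N_s}$ be the velocity of the ODE $\dot x=f(x,t)$, $x(0)=x^0\in\mathbb{R}^{N_s}$. Use a uniform time grid $t^n=n\Delta t$, $n=0,\dots,N_t$, $\Delta t=T/N_t$. A linear multistep scheme is given by integers $k(n)\le n$ and coefficients $\alpha_j^n,\beta_j^n\in\mathbb{R}$, $j=0,\dots,k(n)$, $n=1,\dots,N_t$, with $\alpha_0^n\neq0$. For $w=(w^1,\dots,w^{N_t})\in\mathbb{R}^{N_sN_t}$ (blocks $w^n\in\mathbb{R}^{N_s}$) set $w^0:=x^0$ and define the residual at step $n$ by $r^n(w)=\sum_{j=0}^{k(n)}\alpha_j^n w^{n-j}-\Delta t\sum_{j=0}^{k(n)}\beta_j^n f(w^{n-j},t^{n-j})$, and the space–time residual $\bar r(w)=(r^1(w),\dots,r^{N_t}(w))\in\mathbb{R}^{N_sN_t}$. Let $A_{LM},B_{LM}\in\mathbb{R}^{N_sN_t\times N_sN_t}$ be the block lower-triangular matrices (blocks of size $N_s\times N_s$) whose $(n,n-j)$ block is $\alpha_j^n I_{N_s}$, resp. $\beta_j^n I_{N_s}$, for $0\le j\le k(n)$ with $n-j\ge1$, and zero otherwise. $\sigma_{\max}(M)$, $\sigma_{\min}(M)$ denote the largest and smallest singular values of $M$; $\|\cdot\|_2$ is the Euclidean norm on $\mathbb{R}^{N_sN_t}$. The space–time trial subspace is the affine subspace $\mathcal{S}=\{(x^0,\dots,x^0)+\sum_{i=1}^{n_{st}}c_i\pi_i: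 c\in\mathbb{R}^{n_{st}}\}\subseteq\mathbb{R}^{N_sN_t}$ for given vectors $\pi_1,\dots,\pi_{n_{st}}\in\mathbb{R}^{N_sN_t}$; $\bar A\in\mathbb{R}^{\bar z\times N_sN_t}$ is a weighting matrix. *)

From HB Require Import structures.
From mathcomp Require Import all_boot all_order all_algebra.
Set Implicit Arguments. Unset Strict Implicit. Unset Printing Implicit Defensive.
Import Order.TTheory GRing.Theory Num.Theory.
Local Open Scope ring_scope.

Section LM.
Variable R : rcfType.

Definition norm2 (m : nat) (v : 'cV[R]_m) : R := Num.sqrt (\sum_(i < m) v i 0 ^+ 2).

(* Largest / smallest singular value of a square matrix, variationally:
   sigma_max(M) = max_{|v|=1} |M v|,  sigma_min(M) = min_{|v|=1} |M v|. *)
Definition is_sigma_max (m : nat) (M : 'M[R]_m) (s : R) : Prop :=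
  (exists v : 'cV[R]_m, norm2 v = 1 /\ norm2 (M *m v) = s) /\
  (forall v : 'cV[R]_m, norm2 v = 1 -> norm2 (M *m v) <= s).
Definition is_sigma_min (m : nat) (M : 'M[R]_m) (s : R) : Prop :=
  (exists v : 'cV[R]_m, norm2 v = 1 /\ norm2 (M *m v) = s) /\
  (forall v : 'cV[R]_m, norm2 v = 1 -> s <= norm2 (M *m v)).

Variables Ns Nt : nat.

(* Space-time vectors live in 'cV_(Nt * Ns); the index mxvec_index i a
   (i : 'I_Nt, a : 'I_Ns) is the a-th component of block w^(i+1)
   (row-major stacking: blocks w^1, ..., w^Nt). *)
Definition st_idx (p : 'I_(Nt * Ns)) : 'I_Nt * 'I_Ns :=
  enum_val (cast_ord (esym (@mxvec_cast Nt Ns)) p).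

Definition blk (w : 'cV[R]_(Nt * Ns)) (i : 'I_Nt) : 'cV[R]_Ns :=
  \col_(a < Ns) w (mxvec_index i a) 0.

Definition rep (x0 : 'cV[R]_Ns) : 'cV[R]_(Nt * Ns) :=
  \col_(p < Nt * Ns) x0 (st_idx p).2 0.

Variable T : R.
Definition dt : R := T / Nt%:R.
Definition tgrid (m : nat) : R := m%:R * dt.

Variable f : 'cV[R]_Ns -> R -> 'cV[R]_Ns.
Variable x0 : 'cV[R]_Ns.
Variable k : nat -> nat.
Variables alpha beta : nat -> nat -> R.  (* alpha n j = alpha_j^n *)

Definition state (w : 'cV[R]_(Nt * Ns)) (m : nat) : 'cV[R]_Ns :=
  match m with
  | 0 => x0
  | m'.+1 => match (insub m' : option 'I_Nt) with Some i => blk w i | None => 0 end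
  end.

Definition resid (w : 'cV[R]_(Nt * Ns)) (n : nat) : 'cV[R]_Ns :=
  \sum_(j < (k n).+1)
     (alpha n j *: state w (n - j)%N - (dt * beta n j) *: f (state w (n - j)%N) (tgrid (n - j)%N)).

Definition rbar (w : 'cV[R]_(Nt * Ns)) : 'cV[R]_(Nt * Ns) :=
  \col_(p < Nt * Ns) resid w (st_idx p).1.+1 (st_idx p).2 0.

(* Block lower-triangular matrix with (n, n-j) block c_j^n I_Ns for
   0 <= j <= k(n), n-j >= 1; zero otherwise.  With 0-based block indices
   i = n-1, i' = n-j-1. *)
Definition LMmat (c : nat -> nat -> R) : 'M[R]_(Nt * Ns) :=
  \matrix_(p < Nt * Ns, q < Nt * Ns)
    let i := val (st_idx p).1 in let i' := val (st_idx q).1 in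
    if ((st_idx p).2 == (st_idx q).2) && (i' <= i)%N && (i - i' <= k i.+1)%N
    then c i.+1 (i - i')%N else 0.

Definition A_LM := LMmat alpha.
Definition B_LM := LMmat beta.

Definition inS (nst : nat) (pi : 'I_nst -> 'cV[R]_(Nt * Ns)) (w : 'cV[R]_(Nt * Ns)) : Prop :=
  exists c : 'I_nst -> R, w = rep x0 + \sum_(i < nst) c i *: pi i.

End LM.

From HB Require Import structures.
From mathcomp Require Import all_boot all_order all_algebra.
From mathcomp Require Import ring lra.
Import Order.TTheory GRing.Theory Num.Theory.
Set Implicit Arguments. Unset Strict Implicit. Unset Printing Implicit Defensive.
Local Open Scope ring_scope.

(* Subtracting the schemes at v and w gives
     rbar v - rbar w = A_LM (v - w) - dt B_LM F,
   where F stacks the differences f(v^n, t^n) - f(w^n, t^n), so |F| <= L_f |v - w|.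
   Bounding |A_LM (v - w)| below by sigma_min(A_LM) and |B_LM F| above by sigma_max(B_LM)
   yields the stability estimate K_r |v - w| <= |rbar v - rbar w|.  For the exact solution
   rbar x = 0, and hypothesis (iii) turns |rbar w| into |Abar rbar w| / P.  Each block of a
   space-time vector is bounded by the whole vector, which gives the bound on the maximum. *)

Lemma cauchy_schwarz_sum (R : realDomainType) (I : finType) (a b : I -> R) :
  (\sum_i a i * b i) ^+ 2 <= (\sum_i a i ^+ 2) * (\sum_i b i ^+ 2).
Proof.
pose Y i j := a i ^+ 2 * b j ^+ 2 - (a i * b i) * (a j * b j).
have gapE : (\sum_i a i ^+ 2) * (\sum_i b i ^+ 2) - (\sum_i a i * b i) ^+ 2
            = \sum_i \sum_j Y i j.
  rewrite expr2 !mulr_suml -sumrB; apply: eq_bigr => i _.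
  by rewrite !mulr_sumr -sumrB.
have lagrange : \sum_i \sum_j (a i * b j - a j * b i) ^+ 2 = 2 * \sum_i \sum_j Y i j.
  transitivity (\sum_i \sum_j (Y i j + Y j i)).
    by apply: eq_bigr => i _; apply: eq_bigr => j _; rewrite /Y; ring.
  under eq_bigr do rewrite big_split.
  by rewrite big_split /= [X in _ + X]exchange_big /= mulr2n mulrDl mul1r.
have : 0 <= \sum_i \sum_j (a i * b j - a j * b i) ^+ 2.
  by do 2!apply: sumr_ge0 => ? _; exact: sqr_ge0.
by rewrite lagrange pmulr_rge0 // -gapE subr_ge0.
Qed.

Section EuclideanNorm.
Variables (R : rcfType) (m : nat).
Implicit Types u v : 'cV[R]_m.

Definition sqnorm v : R := \sum_i v i 0 ^+ 2.

Lemma norm2E v : norm2 v = Num.sqrt (sqnorm v).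
Proof. by []. Qed.

Lemma sqnorm_ge0 v : 0 <= sqnorm v.
Proof. by apply: sumr_ge0 => i _; exact: sqr_ge0. Qed.

Lemma norm2_ge0 v : 0 <= norm2 v.
Proof. exact: sqrtr_ge0. Qed.

Lemma sqr_norm2 v : norm2 v ^+ 2 = sqnorm v.
Proof. by rewrite sqr_sqrtr // sqnorm_ge0. Qed.

Lemma norm2_eq0 v : (norm2 v == 0) = (v == 0).
Proof.
apply/eqP/eqP => [nv0 | ->]; last first.
  by rewrite /norm2 big1 ?sqrtr0 // => i _; rewrite mxE expr0n.
have sq0 : sqnorm v = 0 by rewrite -sqr_norm2 nv0 expr0n.
apply/matrixP => i j; rewrite ord1 mxE; apply/eqP; rewrite -sqrf_eq0.
by rewrite (psumr_eq0P _ sq0) // => l _; exact: sqr_ge0.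
Qed.

Lemma norm2_0 : norm2 (0 : 'cV[R]_m) = 0.
Proof. by apply/eqP; rewrite norm2_eq0. Qed.

Lemma norm2_gt0 v : v != 0 -> 0 < norm2 v.
Proof. by rewrite lt_def norm2_ge0 norm2_eq0 => ->. Qed.

Lemma norm2Z c v : norm2 (c *: v) = `|c| * norm2 v.
Proof.
have sqE : sqnorm (c *: v) = c ^+ 2 * sqnorm v.
  by rewrite /sqnorm mulr_sumr; apply: eq_bigr => i _; rewrite mxE exprMn.
by rewrite !norm2E sqE sqrtrM ?sqr_ge0 // sqrtr_sqr.
Qed.

Lemma norm2N v : norm2 (- v) = norm2 v.
Proof. by rewrite -scaleN1r norm2Z normrN normr1 mul1r. Qed.

Lemma norm2D u v : norm2 (u + v) <= norm2 u + norm2 v.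
Proof.
have uv_ge0 : 0 <= norm2 u + norm2 v by rewrite addr_ge0 ?norm2_ge0.
rewrite -(ger0_norm uv_ge0) -sqrtr_sqr norm2E ler_sqrt ?sqr_ge0 //.
have -> : sqnorm (u + v) = sqnorm u + sqnorm v + 2 * \sum_i u i 0 * v i 0.
  rewrite /sqnorm mulr_sumr -!big_split /=.
  by apply: eq_bigr => i _; rewrite mxE; ring.
have cs : \sum_i u i 0 * v i 0 <= norm2 u * norm2 v.
  apply: le_trans (ler_norm _) _.
  rewrite -sqrtr_sqr !norm2E -sqrtrM ?sqnorm_ge0 // ler_sqrt ?mulr_ge0 ?sqnorm_ge0 //.
  exact: cauchy_schwarz_sum.
rewrite sqrrD !sqr_norm2; lra.
Qed.

End EuclideanNorm.

Section SingularValues.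
Variables (R : rcfType) (m : nat) (M : 'M[R]_m).

Lemma sigma_max_ge0 s : is_sigma_max M s -> 0 <= s.
Proof. by case=> [[v [_ <-]] _]; exact: norm2_ge0. Qed.

Lemma sigma_min_mulmx_ge s v : is_sigma_min M s -> s * norm2 v <= norm2 (M *m v).
Proof.
case=> _ minM; have [-> | v_neq0] := eqVneq v 0.
  by rewrite mulmx0 norm2_0 mulr0.
have v_gt0 := norm2_gt0 v_neq0.
have := minM ((norm2 v)^-1 *: v).
rewrite -scalemxAr !norm2Z ger0_norm ?invr_ge0 ?norm2_ge0 // mulVf ?gt_eqF //.
by move=> /(_ erefl); rewrite ler_pdivlMl // mulrC.
Qed.

Lemma sigma_max_mulmx_le s v : is_sigma_max M s -> norm2 (M *m v) <= s * norm2 v.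
Proof.
case=> _ maxM; have [-> | v_neq0] := eqVneq v 0.
  by rewrite mulmx0 norm2_0 mulr0.
have v_gt0 := norm2_gt0 v_neq0.
have := maxM ((norm2 v)^-1 *: v).
rewrite -scalemxAr !norm2Z ger0_norm ?invr_ge0 ?norm2_ge0 // mulVf ?gt_eqF //.
by move=> /(_ erefl); rewrite ler_pdivrMl // mulrC.
Qed.

End SingularValues.

Section SpaceTime.
Variables (R : rcfType) (Ns Nt : nat).
Implicit Types v w : 'cV[R]_(Nt * Ns).

Lemma st_idx_mxvec (i : 'I_Nt) (a : 'I_Ns) : st_idx (mxvec_index i a) = (i, a).
Proof. by rewrite /st_idx /mxvec_index cast_ordK enum_rankK. Qed.

Lemma mxvec_st_idx (p : 'I_(Nt * Ns)) : mxvec_index (st_idx p).1 (st_idx p).2 = p.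
Proof. by rewrite /st_idx /mxvec_index -surjective_pairing enum_valK cast_ordKV. Qed.

Lemma sum_st_idx (F : 'I_(Nt * Ns) -> R) :
  \sum_p F p = \sum_(i < Nt) \sum_(a < Ns) F (mxvec_index i a).
Proof.
rewrite pair_big /= (reindex (fun ia : 'I_Nt * 'I_Ns => mxvec_index ia.1 ia.2)) //.
exists (@st_idx Ns Nt) => [[i a] _ | p _]; first by rewrite st_idx_mxvec.
exact: mxvec_st_idx.
Qed.

Lemma sqnorm_blk v : sqnorm v = \sum_(i < Nt) sqnorm (blk v i).
Proof. by rewrite /sqnorm sum_st_idx; do 2!apply: eq_bigr => ? _; rewrite mxE. Qed.

Lemma blkB v w i : blk (v - w) i = blk v i - blk w i.
Proof. by apply/matrixP => a j; rewrite !mxE. Qed.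

Lemma norm2_blk_le v i : norm2 (blk v i) <= norm2 v.
Proof.
rewrite !norm2E ler_sqrt ?sqnorm_ge0 // [leRHS]sqnorm_blk (bigD1 i) //= lerDl.
by apply: sumr_ge0 => j _; exact: sqnorm_ge0.
Qed.

Lemma bigmax_norm2_blk_le v : \big[Num.max/0]_(i < Nt) norm2 (blk v i) <= norm2 v.
Proof.
apply: (big_ind (fun y => y <= norm2 v)) => [|y z yv zv|i _].
- exact: norm2_ge0.
- by rewrite ge_max yv zv.
- exact: norm2_blk_le.
Qed.

Definition stack (g : nat -> 'cV[R]_Ns) : 'cV[R]_(Nt * Ns) :=
  \col_p g (st_idx p).1.+1 (st_idx p).2 0.

Lemma blk_stack g i : blk (stack g) i = g i.+1.
Proof. by apply/matrixP => a j; rewrite ord1 !mxE st_idx_mxvec. Qed.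

Lemma norm2_stack_le (g : nat -> 'cV[R]_Ns) v L : 0 <= L ->
  (forall i : 'I_Nt, norm2 (g i.+1) <= L * norm2 (blk v i)) ->
  norm2 (stack g) <= L * norm2 v.
Proof.
move=> L_ge0 gv; rewrite -(ger0_norm L_ge0) -sqrtr_sqr !norm2E -sqrtrM ?sqr_ge0 //.
rewrite ler_sqrt ?mulr_ge0 ?sqr_ge0 ?sqnorm_ge0 // !sqnorm_blk mulr_sumr.
apply: ler_sum => i _; rewrite blk_stack -!sqr_norm2 -exprMn !expr2.
by apply: ler_pM; rewrite ?norm2_ge0 ?gv.
Qed.

Lemma state_succ x0 w (i : 'I_Nt) : state x0 w i.+1 = blk w i.
Proof. by rewrite /= valK. Qed.

Lemma stack_stateB x0 v w : stack (fun n => state x0 v n - state x0 w n) = v - w.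
Proof. by apply/matrixP => p j; rewrite ord1 !mxE /= valK !mxE mxvec_st_idx. Qed.

(* Entry (i, a) of [LMmat c *m stack g] is the a-th entry of sum_j c_j^(i+1) g^(i+1-j);
   the term j = i+1 of the block row, absent from LMmat, is killed by g 0 = 0. *)
Lemma LMmat_mul_stack k (c : nat -> nat -> R) g (i : 'I_Nt) (a : 'I_Ns) :
  g 0%N = 0 -> (k i.+1 <= i.+1)%N ->
  (LMmat Ns Nt k c *m stack g) (mxvec_index i a) 0
    = \sum_(j < (k i.+1).+1) c i.+1 j * g (i.+1 - j)%N a 0.
Proof.
move=> g0 k_le.
pose F n := (if (n <= i)%N && (i - n <= k i.+1)%N then c i.+1 (i - n)%N else 0)
            * g n.+1 a 0.
pose H j := c i.+1 j * g (i.+1 - j)%N a 0.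
have blockrowE : (LMmat Ns Nt k c *m stack g) (mxvec_index i a) 0 = \sum_(i' < Nt) F i'.
  rewrite mxE sum_st_idx; apply: eq_bigr => i' _.
  rewrite (bigD1 a) //= big1 ?addr0 => [|b b_neq_a].
    by rewrite !mxE !st_idx_mxvec /= eqxx.
  by rewrite !mxE !st_idx_mxvec /= eq_sym (negbTE b_neq_a) mul0r.
have lowerE : \sum_(i' < Nt) F i' = \sum_(0 <= i' < i.+1) F i'.
  rewrite -(big_mkord xpredT F) (big_cat_nat _ (n := i.+1)) //=.
  rewrite [X in _ + X](_ : _ = 0) ?addr0 //.
  rewrite big_nat_cond big1 // => n /andP [/andP [i_lt_n _] _].
  by rewrite /F leqNgt i_lt_n mul0r.
have revE : \sum_(0 <= i' < i.+1) F i'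
            = \sum_(0 <= j < i.+2) (if (j <= k i.+1)%N then H j else 0).
  rewrite big_nat_rev [RHS]big_nat_recr //= /H subnn g0 mxE mulr0 if_same addr0.
  apply: eq_big_nat => j /andP [_ j_lt].
  rewrite /F add0n subSS leq_subr /= subKn // -subSn //.
  by case: ifP => _ //; rewrite mul0r.
rewrite blockrowE lowerE revE -(big_mkord xpredT H) (@big_nat_widen _ _ _ 0 _ i.+2) //.
by rewrite [RHS]big_mkcond /=; apply: eq_bigr => j _; rewrite ltnS.
Qed.

End SpaceTime.

Section Scheme.
Variables (R : rcfType) (Ns Nt : nat) (T : R) (f : 'cV[R]_Ns -> R -> 'cV[R]_Ns).
Variables (x0 : 'cV[R]_Ns) (k : nat -> nat) (alpha beta : nat -> nat -> R).
Hypothesis k_le : forall n, (1 <= n <= Nt)%N -> (k n <= n)%N.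
Implicit Types v w : 'cV[R]_(Nt * Ns).

Local Notation rbar := (rbar T f x0 k alpha beta).
Local Notation fdiff v w :=
  (stack Nt (fun n => f (state x0 v n) (tgrid Nt T n) - f (state x0 w n) (tgrid Nt T n))).

Lemma rbarB v w : rbar v - rbar w
  = A_LM Ns Nt k alpha *m (v - w) - dt Nt T *: (B_LM Ns Nt k beta *m fdiff v w).
Proof.
apply/matrixP => p j; rewrite ord1 -[p]mxvec_st_idx.
move: (st_idx p).1 (st_idx p).2 => i a.
have k_le_i : (k i.+1 <= i.+1)%N by apply: k_le; rewrite ltn_ord.
rewrite -[v - w in RHS](stack_stateB x0) [in RHS]mxE LMmat_mul_stack ?subrr //.
rewrite [in RHS]mxE [in RHS]mxE LMmat_mul_stack ?subrr //.
rewrite !mxE !st_idx_mxvec /= /resid !summxE.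
rewrite mulr_sumr -!sumrB; apply: eq_bigr => l _; rewrite !mxE; ring.
Qed.

Lemma tgrid_succ_mem (i : 'I_Nt) : 0 <= T -> 0 <= tgrid Nt T i.+1 <= T.
Proof.
move=> T_ge0; have Nt_gt0 : (0 < Nt)%N by apply: leq_ltn_trans (ltn_ord i).
rewrite /tgrid /dt mulr_ge0 ?divr_ge0 ?ler0n //= mulrA ler_pdivrMr ?ltr0n //.
by rewrite mulrC ler_wpM2l // ler_nat.
Qed.

Lemma rbar_stability (Lf sAmin sBmax : R) v w :
  0 <= T -> 0 <= Lf ->
  (forall (y z : 'cV[R]_Ns) (t : R), 0 <= t <= T ->
     norm2 (f y t - f z t) <= Lf * norm2 (y - z)) ->
  is_sigma_min (A_LM Ns Nt k alpha) sAmin -> is_sigma_max (B_LM Ns Nt k beta) sBmax ->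
  (sAmin - dt Nt T * Lf * sBmax) * norm2 (v - w) <= norm2 (rbar v - rbar w).
Proof.
move=> T_ge0 Lf_ge0 lipf minA maxB.
set e := v - w; set d := fdiff v w.
have dt_ge0 : 0 <= dt Nt T by rewrite divr_ge0 ?ler0n.
have d_le : norm2 d <= Lf * norm2 e.
  rewrite /d /e; apply: norm2_stack_le => // i.
  by rewrite blkB -!(state_succ x0); apply: lipf; exact: tgrid_succ_mem.
have Bd_le : dt Nt T * norm2 (B_LM Ns Nt k beta *m d) <= dt Nt T * (sBmax * (Lf * norm2 e)).
  rewrite ler_wpM2l //; apply: le_trans (sigma_max_mulmx_le d maxB) _.
  by rewrite ler_wpM2l // (sigma_max_ge0 maxB).
have Ae_le : sAmin * norm2 e
             <= norm2 (rbar v - rbar w) + dt Nt T * norm2 (B_LM Ns Nt k beta *m d).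
  apply: le_trans (sigma_min_mulmx_ge e minA) _.
  have -> : A_LM Ns Nt k alpha *m e = (rbar v - rbar w) + dt Nt T *: (B_LM Ns Nt k beta *m d).
    by rewrite rbarB subrK.
  by apply: le_trans (norm2D _ _) _; rewrite norm2Z ger0_norm.
have -> : (sAmin - dt Nt T * Lf * sBmax) * norm2 e
          = sAmin * norm2 e - dt Nt T * (sBmax * (Lf * norm2 e)) by ring.
lra.
Qed.

End Scheme.

Lemma lt_div_subr_mul_gt0 (R : realFieldType) (d a b : R) :
  0 < d -> 0 <= b -> d < a / b -> 0 < a - d * b.
Proof.
move=> d_gt0 b_ge0; have [-> | b_neq0] := eqVneq b 0.
  by rewrite invr0 mulr0 => /(lt_trans d_gt0); rewrite ltxx.
have b_gt0 : 0 < b by rewrite lt_def b_neq0.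
by rewrite ltr_pdivlMr // subr_gt0.
Qed.

Unset Implicit Arguments. Set Strict Implicit.

Theorem mainTheorem6 (R : rcfType) (Ns Nt : nat) (T : R)
  (f : 'cV[R]_Ns -> R -> 'cV[R]_Ns) (x0 : 'cV[R]_Ns)
  (k : nat -> nat) (alpha beta : nat -> nat -> R)
  (nst : nat) (pi : 'I_nst -> 'cV[R]_(Nt * Ns))
  (zbar : nat) (Abar : 'M[R]_(zbar, Nt * Ns))
  (Lf P sAmin sBmax : R) (x : 'cV[R]_(Nt * Ns)) :
  (0 < Nt)%N -> 0 < T ->
  (forall n : nat, (1 <= n <= Nt)%N -> (k n <= n)%N /\ alpha n 0%N != 0) ->
  is_sigma_min (A_LM Ns Nt k alpha) sAmin ->
  is_sigma_max (B_LM Ns Nt k beta) sBmax ->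
  (* (i) Lipschitz continuity *)
  0 < Lf ->
  (forall (w y : 'cV[R]_Ns) (t : R), 0 <= t <= T ->
      norm2 (f w t - f y t) <= Lf * norm2 (w - y)) ->
  (* (ii) time step restriction *)
  dt Nt T < sAmin / (Lf * sBmax) ->
  (* (iii) *)
  0 < P ->
  (forall w, inS x0 pi w ->
      P * norm2 (rbar T f x0 k alpha beta w)
        <= norm2 (Abar *m rbar T f x0 k alpha beta w)) ->
  (* x solves the full-order scheme *)
  rbar T f x0 k alpha beta x = 0 ->
  let Kr := sAmin - dt Nt T * Lf * sBmax in
  (forall w, inS x0 pi w ->
     \big[Num.max/0]_(i < Nt) norm2 (blk x i - blk w i) <= norm2 (x - w)
     /\ norm2 (x - w)
        <= (P * Kr)^-1 * norm2 (Abar *m rbar T f x0 k alpha beta w))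
  /\
  (forall xt, inS x0 pi xt ->
     (forall w, inS x0 pi w ->
        norm2 (Abar *m rbar T f x0 k alpha beta xt)
          <= norm2 (Abar *m rbar T f x0 k alpha beta w)) ->
     \big[Num.max/0]_(i < Nt) norm2 (blk x i - blk xt i) <= norm2 (x - xt)
     /\ norm2 (x - xt)
        <= (P * Kr)^-1 * norm2 (Abar *m rbar T f x0 k alpha beta xt)).
Proof.
move=> Nt_gt0 T_gt0 k_alpha minA maxB Lf_gt0 lipf dt_lt P_gt0 Abar_ge hx Kr.
have k_le n : (1 <= n <= Nt)%N -> (k n <= n)%N by move/k_alpha => [].
have Kr_gt0 : 0 < Kr.
  rewrite /Kr -mulrA lt_div_subr_mul_gt0 ?mulr_ge0 ?(sigma_max_ge0 maxB) ?ltW //.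
  by rewrite divr_gt0 ?ltr0n.
have blk_le w : \big[Num.max/0]_(i < Nt) norm2 (blk x i - blk w i) <= norm2 (x - w).
  by under eq_bigr do rewrite -blkB; exact: bigmax_norm2_blk_le.
have err_le w : inS x0 pi w ->
    norm2 (x - w) <= (P * Kr)^-1 * norm2 (Abar *m rbar T f x0 k alpha beta w).
  move=> Sw; rewrite ler_pdivlMl ?mulr_gt0 // -mulrA (le_trans _ (Abar_ge w Sw)) //.
  rewrite ler_pM2l //.
  have := rbar_stability x0 k_le x w (ltW T_gt0) (ltW Lf_gt0) lipf minA maxB.
  by rewrite hx sub0r norm2N.
by split=> [w /err_le ? | xt /err_le ? _]; split; first exact: blk_le.
Qed.
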